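(* Let $\mathcal{V}$ be a finite vocabulary, $L\ge1$, $\mathbf{m}\notin\mathcal{V}$ a mask token, and $p_{\mathrm{data}}$ a distribution on $\mathcal{V}^L$. Consider a forward masking process of the form $$p(\mathbf{x}_t=\mathbf{z}\mid\mathbf{x}_0,t)=c_t\,\alpha_t(\mathbf{z})\,\mathbf{1}\{\mathbf{x}_0^{\mathrm{um}(\mathbf{z})}=\mathbf{z}^{\mathrm{um}(\mathbf{z})}\},\qquad \mathbf{z}\in(\mathcal{V}\cup\{\mathbf{m}\})^L,$$ where $\alpha_t:(\mathcal{V}\cup\{\mathbf{m}\})^L\to[0,1]$ is a weighting function and $c_t>0$ is a normalizing constant not depending on $\mathbf{x}_0$. Let $p_f$ be the induced joint law of $(\mathbf{x}_0,t,\mathbf{x}_t)$: $\mathbf{x}_0\sim p_{\mathrm{data}}$, $t\sim\mathrm{Unif}[0,1]$, then $\mathbf{x}_t\sim p(\cdot\mid\mathbf{x}_0,t)$. Consider the loss $$\mathcal{L}(f)=\mathbb{E}_{(\mathbf{x}_0,t,\mathbf{x}_t)\sim p_f}\Big[\frac1t\sum_{i:\mathbf{x}_t^i=\mathbf{m}}-\log f^i(\mathbf{x}_0^i\mid\mathbf{x}_t)\Big]$$ over all families $f=(f^i(\cdot\mid\mathbf{z}))_{i\in[L],\mathbf{z}}$ of probability distributions on $\mathcal{V}$. Then any minimizer $f^\star$ equals the ground-truth posterior of $p_{\mathrm{data}}$: for every $i$ and (almost) every $\mathbf{z}$ that occurs with positive probability as $\mathbf{x}_t$ and has $\mathbf{z}^i=\mathbf{m}$,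 $f^{\star i}(\cdot\mid\mathbf{z})=\mathbb{P}(\mathbf{x}_0^i=\cdot\mid\mathbf{x}_t=\mathbf{z})$, and this posterior does not depend on $t$ or $\alpha_t$: $\mathbb{P}(\mathbf{x}_0=\mathbf{x}\mid\mathbf{x}_t=\mathbf{z})\propto \mathbf{1}\{\mathbf{x}^{\mathrm{um}(\mathbf{z})}=\mathbf{z}^{\mathrm{um}(\mathbf{z})}\}\,p_{\mathrm{data}}(\mathbf{x})$.
   Context: For $\mathbf{z}\in(\mathcal{V}\cup\{\mathbf{m}\})^L$, $\mathrm{um}(\mathbf{z}):=\{i:\mathbf{z}^i\neq\mathbf{m}\}$ is the set of unmasked positions, and $\mathbf{x}^{S}$ denotes the restriction of a sequence to the index set $S$. *)

From HB Require Import structures.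
From mathcomp Require Import all_boot all_order all_algebra.
From mathcomp Require Import all_classical all_reals all_analysis.
Set Implicit Arguments. Unset Strict Implicit. Unset Printing Implicit Defensive.
Import Order.TTheory GRing.Theory Num.Theory.
Local Open Scope ring_scope.

(* Clean sequences: x in V^L.  Masked sequences: z in (V ∪ {m})^L, where
   the mask token m is encoded as [None] and a token v in V as [Some v]. *)
Notation seqV V L := {ffun 'I_L -> V}.
Notation mseq V L := {ffun 'I_L -> option V}.

Definition um (V : finType) (L : nat) (z : mseq V L) : {set 'I_L} :=
  [set i | z i != None].

Definition agree (V : finType) (L : nat) (x : seqV V L) (z : mseq V L) : bool :=
  [forall i in um z, z i == Some (x i)].

Definition isdist (R : realType) (T : finType) (q : T -> R) : Prop :=
  (forall a, 0 <= q a) /\ \sum_(a : T) q a = 1.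

Definition nlog (R : realType) (q : R) : \bar R :=
  if q == 0 then +oo%E else (- ln q)%:E.

Definition joint (R : realType) (V : finType) (L : nat)
  (p : seqV V L -> R) (c : R -> R) (alpha : R -> mseq V L -> R)
  (x : seqV V L) (z : mseq V L) : \bar R :=
  (\int[@lebesgue_measure R]_(t in `[0%R, 1%R]%classic)
     (p x * c t * alpha t z * (agree x z)%:R)%:E)%E.

Definition marg (R : realType) (V : finType) (L : nat)
  (p : seqV V L -> R) (c : R -> R) (alpha : R -> mseq V L -> R)
  (z : mseq V L) : \bar R :=
  (\sum_(x : seqV V L) joint p c alpha x z)%E.

(* The loss  L(f) = E_{p_f}[ (1/t) Σ_{i : x_t^i = m} -log f^i(x_0^i | x_t) ],
   written out as ∫_{[0,1]} Σ_{x0} Σ_z p_data(x0) p(z|x0,t) (...) dt. *)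
Definition loss (R : realType) (V : finType) (L : nat)
  (p : seqV V L -> R) (c : R -> R) (alpha : R -> mseq V L -> R)
  (f : 'I_L -> mseq V L -> V -> R) : \bar R :=
  (\int[@lebesgue_measure R]_(t in `[0%R, 1%R]%classic)
     \sum_(x : seqV V L) \sum_(z : mseq V L)
        ((p x * c t * alpha t z * (agree x z)%:R)%:E *
         ((t^-1)%:E * \sum_(i < L | z i == None) nlog (f i z (x i)))))%E.

From HB Require Import structures.
From mathcomp Require Import all_boot all_order all_algebra.
From mathcomp Require Import all_classical all_reals all_analysis.
From mathcomp Require Import ring lra measurable_realfun.
Set Implicit Arguments. Unset Strict Implicit. Unset Printing Implicit Defensive.
Import Order.TTheory GRing.Theory Num.Theory.
Local Open Scope ring_scope.

(* Integrating out t, the joint law of (x_0, x_t) is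
   P(x_0 = x, x_t = z) = p_data(x) 1{x agrees with z} A(z) with A(z) = ∫_0^1 c_t α_t(z) dt,
   so the posterior is p_data conditioned on agreeing with z, whatever c and α are.
   In the loss, the distribution f^i(.|z) with z^i = m only enters through the term
   B(z) W(z) H(q, f^i(.|z)), where q = P(x_0^i = . | x_t = z), W(z) is the p_data-mass of
   the sequences agreeing with z, B(z) = ∫_0^1 c_t α_t(z) / t dt >= A(z) (> 0 when z has
   positive probability) and H is the cross entropy.  Comparing a minimiser f* of finite
   loss with the family obtained by putting q in that slot gives H(q, f*^i(.|z)) <= H(q, q),
   and the equality case of Gibbs' inequality forces f*^i(.|z) = q. *)

Section CrossEntropy.
Variables (R : realType) (T : finType).
Implicit Types (q f : T -> R) (r : R).

Lemma subr_lt_mul_lnB {x y : R} :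
  0 < x -> 0 < y -> y != x -> x - y < x * (ln x - ln y).
Proof.
move=> x0 y0 yx.
have lnB_neq0 : ln y - ln x != 0.
  by rewrite subr_eq0; apply: contra yx => /eqP lnyx; apply/eqP; apply: ln_inj; rewrite ?posrE.
have expR_lnB : expR (ln y - ln x) = y / x.
  by rewrite -ln_div ?posrE // lnK // posrE divr_gt0.
have := expR_gt1Dx lnB_neq0; rewrite expR_lnB ltr_pdivlMr // => h.
by rewrite mulrBr; rewrite mulrDl mul1r mulrBl ![_ * x]mulrC in h; lra.
Qed.

Lemma nlogE r : r != 0 -> nlog r = (- ln r)%:E.
Proof. by rewrite /nlog => /negbTE ->. Qed.

Lemma nlog_ge0 r : r <= 1 -> (0 <= nlog r)%E.
Proof. by rewrite /nlog; case: eqP => // _ r1; rewrite lee_fin oppr_ge0 ln_le0. Qed.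

Lemma nlog1 : nlog (1 : R) = 0%E.
Proof. by rewrite nlogE ?oner_neq0 // ln1 oppr0. Qed.

Lemma isdist_le1 {q} : isdist q -> forall a, q a <= 1.
Proof. by move=> [q0 q1] a; rewrite -q1 (bigD1 a) //= lerDl sumr_ge0. Qed.

Definition xent q f : \bar R := (\sum_a (q a)%:E * nlog (f a))%E.

Definition xent_term q f a : R := if q a == 0 then 0 else - (q a * ln (f a)).

Lemma xentE q f :
  (forall a, q a != 0 -> f a != 0) -> xent q f = (\sum_a xent_term q f a)%:E.
Proof.
move=> fq; rewrite /xent -sumEFin; apply: eq_bigr => a _; rewrite /xent_term.
have [->|qa0] := eqVneq (q a) 0; first by rewrite mul0e.
by rewrite nlogE ?fq // -EFinM mulrN.
Qed.

Lemma xent_ge0 q f :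
  (forall a, 0 <= q a) -> (forall a, f a <= 1) -> (0 <= xent q f)%E.
Proof. by move=> q0 f1; apply: sume_ge0 => a _; rewrite mule_ge0 ?lee_fin ?nlog_ge0. Qed.

Lemma xent_self_lty q : (xent q q < +oo)%E.
Proof. by rewrite xentE ?ltry. Qed.

Lemma xent_lty_neq0 {q f} a :
  (forall a, 0 <= q a) -> (forall a, f a <= 1) ->
  (xent q f < +oo)%E -> q a != 0 -> f a != 0.
Proof.
move=> q0 f1 xent_lty qa0; apply: contraTneq xent_lty => fa0.
have rest0 : (0 <= \sum_(b | b != a) (q b)%:E * nlog (f b))%E.
  by apply: sume_ge0 => b _; rewrite mule_ge0 ?lee_fin ?nlog_ge0.
rewrite /xent (bigD1 a) //= fa0 /nlog eqxx gt0_muley ?lte_fin ?lt_def ?qa0 ?q0 //.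
by rewrite addye ?ltxx // gt_eqF // (lt_le_trans ltNy0 rest0).
Qed.

Lemma gibbs_eq {q f} : isdist q -> isdist f -> (xent q f <= xent q q)%E -> f =1 q.
Proof.
move=> qd fd le_xent; have [q0 q1] := qd; have [f0 f1] := fd.
have supp a : q a != 0 -> f a != 0.
  exact: xent_lty_neq0 q0 (isdist_le1 fd) (le_lt_trans le_xent (xent_self_lty q)).
move: le_xent; rewrite !xentE // lee_fin => le_sum.
pose gap a := xent_term q f a - xent_term q q a - (q a - f a).
have gap_gt0 a : f a != q a -> 0 < gap a.
  rewrite /gap /xent_term; have [->|qa0] := eqVneq (q a) 0.
    by move=> fa0; rewrite !subrr !sub0r opprK lt_def fa0 f0.
  move=> fq; have qa_gt0 : 0 < q a by rewrite lt_def qa0 q0.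
  have fa_gt0 : 0 < f a by rewrite lt_def supp ?f0.
  by have := subr_lt_mul_lnB qa_gt0 fa_gt0 fq; rewrite mulrBr; lra.
have gap_ge0 a : 0 <= gap a.
  have [fq|/gap_gt0/ltW //] := eqVneq (f a) (q a).
  by rewrite /gap /xent_term fq !subrr.
have gap0 : \sum_a gap a = 0.
  apply/eqP; rewrite eq_le sumr_ge0 // andbT /gap !sumrB q1 f1 subrr subr0.
  by rewrite subr_le0.
move=> a; apply/eqP; apply: contraT => /gap_gt0.
by rewrite (psumr_eq0P (fun b _ => gap_ge0 b) gap0) ?ltxx.
Qed.

End CrossEntropy.

Lemma lee_pmul2l_lty (R : realType) (b x y : \bar R) :
  (0 < b)%E -> (0 <= x)%E -> (0 <= y)%E -> (b * x < +oo)%E ->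
  (b * x <= b * y)%E -> (x <= y)%E.
Proof.
case: b => [r | |] //; first by move=> r0 _ _ _; rewrite lee_pmul2l.
move=> _ x0 y0; have [-> // | x_neq0] := eqVneq x 0%E.
by rewrite gt0_mulye ?ltxx // lt_def x_neq0.
Qed.

Section MaskedDiffusion.
Variables (R : realType) (V : finType) (L : nat).
Variables (p : seqV V L -> R) (c : R -> R) (alpha : R -> mseq V L -> R).
Implicit Types (f : 'I_L -> mseq V L -> V -> R) (phi : V -> R) (t : R).
Implicit Types (i : 'I_L) (x : seqV V L) (z : mseq V L).

Local Notation K := (`[0%R, 1%R]%classic : set R).

Hypothesis p_dist : isdist p.
Hypothesis c_meas : measurable_fun K c.
Hypothesis alpha_meas : forall z, measurable_fun K (alpha ^~ z).
Hypothesis c_gt0 : forall t, 0 <= t <= 1 -> 0 < c t.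
Hypothesis alpha01 : forall t z, 0 <= t <= 1 -> 0 <= alpha t z <= 1.
Hypothesis c_norm : forall t (x : seqV V L), 0 <= t <= 1 ->
  \sum_(z : mseq V L) c t * alpha t z * (agree x z)%:R = 1.

Let inK {t} : K t -> 0 <= t <= 1. Proof. by rewrite /= in_itv. Qed.

Let lebesgueK : lebesgue_measure K = 1%E.
Proof.
by have := @lebesgue_measure_itv R `[0%R, 1%R]; rewrite /= lte_fin ltr01 oppr0 adde0.
Qed.

Let p_ge0 x : 0 <= p x. Proof. by case: p_dist. Qed.

Lemma exists_agree (z : mseq V L) : exists x : seqV V L, agree x z.
Proof.
have [x0 _ | seqV_empty] := pickP (@predT (seqV V L)).
  exists [ffun i => odflt (x0 i) (z i)]; apply/forallP => i.
  by apply/implyP; rewrite inE ffunE; case: (z i).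
by case: p_dist => _; rewrite big_pred0 // => /esym/eqP; rewrite oner_eq0.
Qed.

Definition fwd_prob t z := c t * alpha t z.

Lemma fwd_prob_ge0 t z : K t -> 0 <= fwd_prob t z.
Proof.
move=> /inK tK; have /andP[alpha_ge0 _] := alpha01 z tK.
by rewrite mulr_ge0 // ltW // c_gt0.
Qed.

Lemma fwd_prob_le1 t z : K t -> fwd_prob t z <= 1.
Proof.
move=> tK; have [x xz] := exists_agree z.
rewrite -(c_norm x (inK tK)) (bigD1 z) //= xz mulr1 lerDl.
by apply: sumr_ge0 => z' _; rewrite mulr_ge0 ?fwd_prob_ge0.
Qed.

Lemma measurable_fwd_prob z : measurable_fun K (fwd_prob ^~ z).
Proof. exact: measurable_funM. Qed.

Definition fwd_mass z : R :=
  fine (\int[lebesgue_measure]_(t in K) (fwd_prob t z)%:E)%E.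

Lemma fwd_massE z :
  (\int[lebesgue_measure]_(t in K) (fwd_prob t z)%:E)%E = (fwd_mass z)%:E.
Proof.
have int_ge0 : (0 <= \int[lebesgue_measure]_(t in K) (fwd_prob t z)%:E)%E.
  by apply: integral_ge0 => t tK; rewrite lee_fin fwd_prob_ge0.
have int_le1 : (\int[lebesgue_measure]_(t in K) (fwd_prob t z)%:E <= 1)%E.
  apply: le_trans (_ : \int[lebesgue_measure]_(t in K) (cst 1%E) t <= 1)%E.
    apply: ge0_le_integral => //.
    - by move=> t tK; rewrite lee_fin fwd_prob_ge0.
    - by apply/measurable_EFinP; exact: measurable_fwd_prob.
    - by move=> t tK; rewrite lee_fin fwd_prob_le1.
  by rewrite integral_cst // mul1e -[X in (_ <= X)%E]lebesgueK.
by rewrite /fwd_mass fineK // ge0_fin_numE // (le_lt_trans int_le1) ?ltry.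
Qed.

Lemma fwd_mass_ge0 z : 0 <= fwd_mass z.
Proof.
by rewrite -lee_fin -fwd_massE integral_ge0 // => t tK; rewrite lee_fin fwd_prob_ge0.
Qed.

Lemma jointE x z :
  joint p c alpha x z = (p x * (agree x z)%:R * fwd_mass z)%:E.
Proof.
transitivity (\int[lebesgue_measure]_(t in K)
    ((p x * (agree x z)%:R)%:E * (fwd_prob t z)%:E))%E.
  by apply: eq_integral => t _; rewrite -EFinM /fwd_prob; congr EFin; ring.
rewrite ge0_integralZl_EFin ?fwd_massE ?mulr_ge0 //.
- by move=> t tK; rewrite lee_fin fwd_prob_ge0.
- by apply/measurable_EFinP; exact: measurable_fwd_prob.
Qed.

Definition consistent_mass z := \sum_(x : seqV V L) p x * (agree x z)%:R.

Lemma margE z : marg p c alpha z = (consistent_mass z * fwd_mass z)%:E.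
Proof.
by rewrite /marg; under eq_bigr do rewrite jointE; rewrite sumEFin mulr_suml.
Qed.

Lemma marg_gt0 z : (0 < marg p c alpha z)%E ->
  0 < consistent_mass z /\ 0 < fwd_mass z.
Proof.
have mass_ge0 : 0 <= consistent_mass z by rewrite sumr_ge0 // => x _; rewrite mulr_ge0.
rewrite margE lte_fin => prod_gt0; split.
  by rewrite lt_def mass_ge0 andbT; apply: contraTneq prod_gt0 => ->; rewrite mul0r ltxx.
by rewrite lt_def fwd_mass_ge0 andbT; apply: contraTneq prod_gt0 => ->; rewrite mulr0 ltxx.
Qed.

Definition posterior (i : 'I_L) z v :=
  (\sum_(x : seqV V L | x i == v) p x * (agree x z)%:R) / consistent_mass z.

Lemma posterior_dist i z : 0 < consistent_mass z -> isdist (posterior i z).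
Proof.
move=> mass_gt0; split => [v|].
  apply: divr_ge0; last exact: ltW.
  by apply: sumr_ge0 => x _; rewrite mulr_ge0.
rewrite /posterior -mulr_suml (_ : \sum_v _ = consistent_mass z) ?divff ?gt_eqF //.
by rewrite /consistent_mass (partition_big (fun x : seqV V L => x i) predT).
Qed.


Lemma posterior_jointE i z v : (0 < marg p c alpha z)%E ->
  fine (\sum_(x : seqV V L | x i == v) joint p c alpha x z)%E / fine (marg p c alpha z) =
  posterior i z v.
Proof.
move=> /marg_gt0[mass_gt0 fwd_mass_gt0]; rewrite margE /=.
under eq_bigr do rewrite jointE; rewrite sumEFin /= -mulr_suml /posterior.
by field; rewrite !gt_eqF.
Qed.

Lemma joint_div_margE x z : (0 < marg p c alpha z)%E ->
  fine (joint p c alpha x z) / fine (marg p c alpha z) =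
  (agree x z)%:R * p x / \sum_(y : seqV V L) (agree y z)%:R * p y.
Proof.
move=> /marg_gt0[mass_gt0 fwd_mass_gt0]; rewrite jointE margE /=.
rewrite (eq_bigr (fun y => p y * (agree y z)%:R)) => [|y _]; last exact: mulrC.
by rewrite -/(consistent_mass z); field; rewrite !gt_eqF.
Qed.

Definition update (f : 'I_L -> mseq V L -> V -> R) i0 z0 (phi : V -> R) :=
  fun i z => if (i == i0) && (z == z0) then phi else f i z.

Lemma update_eq f i0 z0 phi : update f i0 z0 phi i0 z0 = phi.
Proof. by rewrite /update !eqxx. Qed.

Lemma update_neq f i0 z0 phi i z :
  ~~ ((i == i0) && (z == z0)) -> update f i0 z0 phi i z = f i z.
Proof. by rewrite /update => /negbTE ->. Qed.

Lemma update_id f i0 z0 : update f i0 z0 (f i0 z0) = f.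
Proof.
apply/funext => i; apply/funext => z.
by rewrite /update; case: andP => // -[/eqP -> /eqP ->].
Qed.

Lemma update_le1 f i0 z0 phi :
  (forall i z v, f i z v <= 1) -> (forall v, phi v <= 1) ->
  forall i z v, update f i0 z0 phi i z v <= 1.
Proof. by move=> f1 phi1 i z v; rewrite /update; case: ifP. Qed.

Definition loss_integrand (f : 'I_L -> mseq V L -> V -> R) t : \bar R :=
  (\sum_(x : seqV V L) \sum_(z : mseq V L)
     ((p x * c t * alpha t z * (agree x z)%:R)%:E *
      ((t^-1)%:E * \sum_(i < L | z i == None) nlog (f i z (x i)))))%E.

Lemma lossE f :
  loss p c alpha f = (\int[lebesgue_measure]_(t in K) loss_integrand f t)%E.
Proof. by []. Qed.

Let inv_ge0 {t} : K t -> 0 <= t^-1.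
Proof. by rewrite invr_ge0 => /inK /andP[]. Qed.

Lemma loss_integrand_ge0 f t :
  (forall i z v, f i z v <= 1) -> K t -> (0 <= loss_integrand f t)%E.
Proof.
move=> f1 tK; apply: sume_ge0 => x _; apply: sume_ge0 => z _.
apply: mule_ge0.
  by rewrite lee_fin -(mulrA (p x)) mulr_ge0 // mulr_ge0 // fwd_prob_ge0.
rewrite mule_ge0 ?lee_fin ?inv_ge0 //.
by apply: sume_ge0 => i _; exact: nlog_ge0.
Qed.

Let measurable_inv : measurable_fun K (fun t : R => t^-1).
Proof.
apply: (eq_measurable_fun (fun t : R => t `^ (-1))).
  by move=> t /set_mem /inK /andP[t0 _]; exact: powR_inv1.
by apply: measurable_funTS; exact: measurable_powR.
Qed.

Lemma measurable_loss_integrand f : measurable_fun K (loss_integrand f).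
Proof.
apply: emeasurable_sum => x; apply: emeasurable_sum => z.
apply: emeasurable_funM.
  apply/measurable_EFinP; apply: measurable_funM => //.
  by apply: measurable_funM => //; apply: measurable_funM.
by apply: emeasurable_funM; [apply/measurable_EFinP | exact: measurable_cst].
Qed.

Lemma loss_ge0 f : (forall i z v, f i z v <= 1) -> (0 <= loss p c alpha f)%E.
Proof. by move=> f1; rewrite lossE integral_ge0 // => t; exact: loss_integrand_ge0. Qed.

(* The part of the loss integrand due to f^i0(.|z0), up to the factor c_t α_t(z0) / t. *)
Definition slot_loss i0 z0 (phi : V -> R) : \bar R :=
  (\sum_(x : seqV V L) (p x * (agree x z0)%:R)%:E * nlog (phi (x i0)))%E.

Lemma slot_loss_ge0 i0 z0 phi : (forall v, phi v <= 1) -> (0 <= slot_loss i0 z0 phi)%E.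
Proof.
by move=> phi1; apply: sume_ge0 => x _; rewrite mule_ge0 ?nlog_ge0 // lee_fin mulr_ge0.
Qed.

Lemma slot_lossE i0 z0 phi :
  0 < consistent_mass z0 -> (forall v, phi v <= 1) ->
  slot_loss i0 z0 phi = ((consistent_mass z0)%:E * xent (posterior i0 z0) phi)%E.
Proof.
move=> mass_gt0 phi1; have [post_ge0 _] := posterior_dist i0 mass_gt0.
rewrite /slot_loss /xent (partition_big (fun x : seqV V L => x i0) predT) //=.
rewrite ge0_sume_distrr; last by move=> v _; rewrite mule_ge0 ?nlog_ge0 ?lee_fin.
apply: eq_bigr => v _.
rewrite (eq_bigr (fun x => (p x * (agree x z0)%:R)%:E * nlog (phi v)))%E; last first.
  by move=> x /eqP ->.
rewrite -ge0_sume_distrl; last by move=> x _; rewrite lee_fin mulr_ge0.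
rewrite sumEFin muleA -EFinM /posterior; congr (_%:E * _)%E.
by rewrite mulrC divfK ?gt_eqF.
Qed.

Lemma loss_integrand_update f i0 z0 phi t :
  z0 i0 = None -> (forall i z v, f i z v <= 1) -> (forall v, phi v <= 1) -> K t ->
  loss_integrand (update f i0 z0 phi) t =
  (loss_integrand (update f i0 z0 (fun=> 1%R)) t +
   (fwd_prob t z0 / t)%:E * slot_loss i0 z0 phi)%E.
Proof.
move=> zi0 f1 phi1 tK.
have upd1 := update_le1 i0 z0 f1.
rewrite /loss_integrand /slot_loss ge0_sume_distrr; last first.
  by move=> x _; rewrite mule_ge0 ?nlog_ge0 // lee_fin mulr_ge0.
rewrite -big_split /=; apply: eq_bigr => x _.
rewrite (bigD1 z0) // [in RHS](bigD1 z0) //= addeAC; congr (_ + _)%E; last first.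
  apply: eq_bigr => z zz0; congr (_ * (_ * _))%E; apply: eq_bigr => i _.
  by rewrite !update_neq // (negbTE zz0) andbF.
rewrite (bigD1 i0) ?zi0 //= [in RHS](bigD1 i0) ?zi0 //= !update_eq nlog1 add0e.
rewrite (eq_bigr (fun i => nlog (update f i0 z0 (fun=> 1%R) i z0 (x i)))); last first.
  by move=> i /andP[_ ii0]; rewrite !update_neq // (negbTE ii0).
rewrite ge0_muleDr ?nlog_ge0 ?upd1 //; last first.
  by apply: sume_ge0 => i _; rewrite nlog_ge0 ?upd1.
rewrite ge0_muleDr; last 2 first.
- by rewrite mule_ge0 ?lee_fin ?inv_ge0 ?nlog_ge0.
- by rewrite mule_ge0 ?lee_fin ?inv_ge0 // sume_ge0 // => i _; rewrite nlog_ge0 ?upd1.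
rewrite addeC; congr (_ + _)%E.
by rewrite !muleA -!EFinM /fwd_prob; congr (_%:E * _)%E; ring.
Qed.

(* Can be +oo: the 1/t factor of the loss need not be integrable near 0. *)
Definition loss_weight z : \bar R :=
  (\int[lebesgue_measure]_(t in K) (fwd_prob t z / t)%:E)%E.

Let measurable_fwd_prob_div z : measurable_fun K (fun t => (fwd_prob t z / t)%:E).
Proof.
by apply/measurable_EFinP; apply: measurable_funM => //; exact: measurable_fwd_prob.
Qed.

Lemma fwd_mass_le_loss_weight z : ((fwd_mass z)%:E <= loss_weight z)%E.
Proof.
rewrite -fwd_massE /loss_weight.
rewrite -(@integral_itv_obnd_cbnd R 0 (BRight 1) (fun t => (fwd_prob t z)%:E)); last first.
  apply/emeasurable_fun_itv_obnd_cbndP.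
  by apply/measurable_EFinP; exact: measurable_fwd_prob.
rewrite -(@integral_itv_obnd_cbnd R 0 (BRight 1) (fun t => (fwd_prob t z / t)%:E)); last first.
  by apply/emeasurable_fun_itv_obnd_cbndP; exact: measurable_fwd_prob_div.
have sub : (`]0%R, 1%R]%classic `<=` K)%classic.
  by move=> t; rewrite /= !in_itv /= => /andP[/ltW -> ->].
apply: ge0_le_integral => //.
- by move=> t /sub tK; rewrite lee_fin fwd_prob_ge0.
- apply/emeasurable_fun_itv_obnd_cbndP.
  by apply/measurable_EFinP; exact: measurable_fwd_prob.
- by apply/emeasurable_fun_itv_obnd_cbndP; exact: measurable_fwd_prob_div.
move=> t t01; have tK := sub t t01; move: t01; rewrite /= in_itv /= => /andP[t0 t1].
by rewrite lee_fin -{1}(mulr1 (fwd_prob t z)) ler_wpM2l ?fwd_prob_ge0 // invf_ge1.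
Qed.

Lemma loss_update f i0 z0 phi :
  z0 i0 = None -> (forall i z v, f i z v <= 1) -> (forall v, phi v <= 1) ->
  loss p c alpha (update f i0 z0 phi) =
  (loss p c alpha (update f i0 z0 (fun=> 1%R)) + loss_weight z0 * slot_loss i0 z0 phi)%E.
Proof.
move=> zi0 f1 phi1.
have upd1 : forall i z v, update f i0 z0 (fun=> 1%R) i z v <= 1 by exact: update_le1.
rewrite !lossE.
transitivity (\int[lebesgue_measure]_(t in K)
    (loss_integrand (update f i0 z0 (fun=> 1%R)) t +
     (fwd_prob t z0 / t)%:E * slot_loss i0 z0 phi))%E.
  by apply: eq_integral => t /set_mem; exact: loss_integrand_update.
have rate_ge0 t : K t -> (0 <= (fwd_prob t z0 / t)%:E)%E.
  by move=> tK; rewrite lee_fin mulr_ge0 ?fwd_prob_ge0 ?inv_ge0.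
rewrite ge0_integralD //.
- by rewrite ge0_integralZr //; [exact: measurable_fwd_prob_div | exact: slot_loss_ge0].
- by move=> t; exact: loss_integrand_ge0.
- exact: measurable_loss_integrand.
- by move=> t tK; rewrite mule_ge0 ?slot_loss_ge0 ?rate_ge0.
- by apply: emeasurable_funM; [exact: measurable_fwd_prob_div | exact: measurable_cst].
Qed.

Lemma minimizer_eq_posterior (fstar : 'I_L -> mseq V L -> V -> R) i0 z0 :
  (forall i z, isdist (fstar i z)) ->
  (forall g, (forall i z, isdist (g i z)) ->
     (loss p c alpha fstar <= loss p c alpha g)%E) ->
  (loss p c alpha fstar < +oo)%E ->
  z0 i0 = None -> (0 < marg p c alpha z0)%E -> fstar i0 z0 =1 posterior i0 z0.
Proof.
move=> fstar_dist fstar_min fstar_lty zi0 /marg_gt0[mass_gt0 fwd_mass_gt0].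
set q := posterior i0 z0; have q_dist : isdist q := posterior_dist i0 mass_gt0.
have [q_ge0 _] := q_dist; have q_le1 := isdist_le1 q_dist.
have fstar1 i z : forall v, fstar i z v <= 1 := isdist_le1 (fstar_dist i z).
have le_loss : (loss p c alpha fstar <= loss p c alpha (update fstar i0 z0 q))%E.
  by apply: fstar_min => i z; rewrite /update; case: ifP.
have := loss_update zi0 fstar1 (fstar1 i0 z0); rewrite update_id => loss_fstar.
rewrite loss_fstar (loss_update (phi := q)) ?q_le1 // in le_loss.
rewrite loss_fstar in fstar_lty.
move: le_loss fstar_lty; rewrite !slot_lossE ?q_le1 //.
rewrite !muleA -/q.
set H := loss _ _ _ _; set B := (loss_weight z0 * _)%E => le_loss fstar_lty.
have B_gt0 : (0 < B)%E.
  rewrite mule_gt0 ?lte_fin //.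
  by apply: lt_le_trans (fwd_mass_le_loss_weight z0); rewrite lte_fin.
have xent_f0 : (0 <= xent q (fstar i0 z0))%E.
  exact: xent_ge0 q_ge0 (fstar1 i0 z0).
have H_fin : H \is a fin_num.
  rewrite ge0_fin_numE; last by apply: loss_ge0; exact: update_le1.
  by apply: le_lt_trans fstar_lty; rewrite leeDl // mule_ge0 // ltW.
move: le_loss; rewrite leeD2lE // => le_xent.
apply: (gibbs_eq q_dist (fstar_dist i0 z0)).
apply: lee_pmul2l_lty B_gt0 xent_f0 _ _ le_xent.
  exact: xent_ge0 q_ge0 q_le1.
by apply: le_lt_trans fstar_lty; rewrite leeDr // loss_ge0 //; exact: update_le1.
Qed.

End MaskedDiffusion.

Theorem proposition2 (R : realType) (V : finType) (L : nat) (HL : (1 <= L)%N)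
  (p : {ffun 'I_L -> V} -> R) (Hp : isdist p)
  (c : R -> R) (alpha : R -> {ffun 'I_L -> option V} -> R)
  (Hc_meas : measurable_fun (`[0%R, 1%R]%classic : set R) c)
  (Halpha_meas : forall z, measurable_fun (`[0%R, 1%R]%classic : set R) (alpha ^~ z))
  (Hc_pos : forall t, 0 <= t <= 1 -> 0 < c t)
  (Halpha01 : forall t z, 0 <= t <= 1 -> 0 <= alpha t z <= 1)
  (Hnorm : forall t (x0 : {ffun 'I_L -> V}), 0 <= t <= 1 ->
     \sum_(z : {ffun 'I_L -> option V}) c t * alpha t z * (agree x0 z)%:R = 1)
  (fstar : 'I_L -> {ffun 'I_L -> option V} -> V -> R)
  (Hfam : forall i z, isdist (fstar i z))
  (Hmin : forall g : 'I_L -> {ffun 'I_L -> option V} -> V -> R,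
     (forall i z, isdist (g i z)) -> (loss p c alpha fstar <= loss p c alpha g)%E)
  (Hfin : (loss p c alpha fstar < +oo)%E) :
  forall (i : 'I_L) (z : {ffun 'I_L -> option V}),
    z i = None -> (0 < marg p c alpha z)%E ->
    (forall v : V,
       fstar i z v =
       fine (\sum_(x : {ffun 'I_L -> V} | x i == v) joint p c alpha x z)%E
         / fine (marg p c alpha z))
    /\
    (forall x : {ffun 'I_L -> V},
       fine (joint p c alpha x z) / fine (marg p c alpha z) =
       (agree x z)%:R * p x
         / \sum_(y : {ffun 'I_L -> V}) (agree y z)%:R * p y).
Proof.
move=> i z zi marg_gt0; split => [v | x].
  rewrite posterior_jointE //.
  exact: (minimizer_eq_posterior Hp Hc_meas Halpha_meas Hc_pos Halpha01 Hnorm Hfam Hmin Hfin zi).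
exact: joint_div_margE.
Qed.
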